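(* Let $\beta$ be an ordinal and $Q\subseteq I\times\beta$. Then $Q\in\mathcal{B}_V\otimes\mathcal{P}(\beta)$ if and only if every section $Q_\alpha$ ($\alpha<\beta$) lies in some $\boldsymbol{\Sigma}^V_\xi(I)$ and $\mathrm{comp}(Q)<\omega_1$.
   Context: $I=(0,1)$, $V\subseteq I$ a fixed Lebesgue nonmeasurable set, $\mathcal{B}_V=\sigma(\mathcal{B}(I)\cup\{V\})$, and $\mathcal{B}_V\otimes\mathcal{P}(\beta)$ is the product $\sigma$-algebra on $I\times\beta$. Let $C_0=V$, $C_1=I\setminus V$, and let $\{C_n\}_{n\geq2}$ enumerate the open intervals with rational endpoints contained in $I$. Define $\boldsymbol{\Sigma}^V_1(I)$ as the family of unions of subfamilies of $\{C_n\}_{n\in\omega}$; $\boldsymbol{\Pi}^V_\xi(I)$ as the complements (in $I$) of members of $\boldsymbol{\Sigma}^V_\xi(I)$; and for $\xi>1$, $\boldsymbol{\Sigma}^V_\xi(I)=\{\bigcup_{n\in\omega}A^{(n)}: A^{(n)}\in\boldsymbol{\Pi}^V_{\xi_n}(I),\ \xi_n<\xi\}$. For $Q\subseteq I\times\beta$ and $\alpha<\beta$, the section is $Q_\alpha=\{r:(r,\alpha)\in Q\}$; $\mathrm{comp}(Q,\alpha)=\min\{\xi\geq1:Q_\alpha\in\boldsymbol{\Sigma}^V_\xi(I)\}$ and $\mathrm{comp}(Q)=\sup_{\alpha<\beta}\mathrm{comp}(Q,\alpha)$. *)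

From HB Require Import structures.
From mathcomp Require Import all_boot all_order all_algebra.
From mathcomp Require Import all_classical all_reals all_analysis.

Set Implicit Arguments.
Unset Strict Implicit.
Unset Printing Implicit Defensive.

Import Order.TTheory GRing.Theory Num.Theory.
Local Open Scope classical_set_scope.
Local Open Scope ring_scope.

(* Countable ordinals, represented by Brouwer trees.  Every countable        *)
(* ordinal (i.e. every ordinal < omega_1) is the value |b| of some tree b,   *)
(* where |bzero| = 0, |bsucc b| = |b| + 1, |blim f| = sup_n |f n|, and      *)
(* conversely every |b| is countable.                                        *)
Inductive bord : Type :=
| bzero : bord
| bsucc : bord -> bord
| blim : (nat -> bord) -> bord.

(* ble a b  <->  |a| <= |b| ;  blt a b  <->  |a| < |b| *)
Inductive ble : bord -> bord -> Prop :=
| ble_zero b : ble bzero b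
| ble_succ a b : blt a b -> ble (bsucc a) b
| ble_lim (f : nat -> bord) b : (forall n, ble (f n) b) -> ble (blim f) b
with blt : bord -> bord -> Prop :=
| blt_succ a b : ble a b -> blt a (bsucc b)
| blt_lim a (f : nat -> bord) n : blt a (f n) -> blt a (blim f).

Definition bone : bord := bsucc bzero.

Definition beq (a b : bord) : Prop := ble a b /\ ble b a.

Section Hierarchy.
Variable R : realType.

Definition Iu : set R := `]0, 1[%classic.

(* Lebesgue measurability = Caratheodory measurability w.r.t. Lebesgue outer
   measure (the completed Lebesgue sigma-algebra). *)
Definition lebesgue_measurable (A : set R) : Prop :=
  (@wlength R idfun)^*%mu.-cara.-measurable A.

Definition borel_I : set (set R) :=
  [set B | exists B0 : set (measurableTypeR R), measurable B0 /\ B = Iu `&` B0].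

Definition BV (V : set R) : set (set R) :=
  <<s Iu, borel_I `|` [set V] >>.

Definition BV_prod (V : set R) (T : Type) : set (set (R * T)) :=
  <<s Iu `*` [set: T],
      [set A `*` B | A in BV V & B in [set: set T]] >>.

Definition Cfam (V : set R) : set (set R) :=
  [set V] `|` [set Iu `\` V] `|`
  [set C | exists p q : rat, C = `]ratr p, ratr q[%classic /\ C `<=` Iu].

(* SigmaV V xi A  <->  A \in Sigma^V_xi(I), for a countable ordinal xi >= 1. *)
Inductive SigmaV (V : set R) : bord -> set R -> Prop :=
| SigmaV_one xi (F : set (set R)) :
    beq xi bone -> F `<=` Cfam V ->
    SigmaV V xi (\bigcup_(C in F) C)
| SigmaV_gt xi (xs : nat -> bord) (S : nat -> set R) :
    blt bone xi ->
    (forall n, blt (xs n) xi) ->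
    (forall n, SigmaV V (xs n) (S n)) ->
    (* A^(n) := I \ S n is in Pi^V_(xs n)(I) *)
    SigmaV V xi (\bigcup_n (Iu `\` S n)).

Definition PiV (V : set R) (xi : bord) (A : set R) : Prop :=
  exists S, SigmaV V xi S /\ A = Iu `\` S.

Definition section (T : Type) (Q : set (R * T)) (alpha : T) : set R :=
  [set r | Q (r, alpha)].

(* comp(Q, alpha) <= xi, i.e. Q_alpha \in Sigma^V_eta for some 1 <= eta <= xi *)
Definition comp_le (V : set R) (T : Type) (Q : set (R * T)) (alpha : T)
  (xi : bord) : Prop :=
  exists eta, ble eta xi /\ SigmaV V eta (section Q alpha).

Definition sections_in_hierarchy (V : set R) (T : Type) (Q : set (R * T)) :=
  forall alpha : T, exists xi : bord, SigmaV V xi (section Q alpha).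

(* comp(Q) = sup_alpha comp(Q, alpha) < omega_1, i.e. the comp(Q, alpha) are
   bounded by a single countable ordinal. *)
Definition comp_lt_omega1 (V : set R) (T : Type) (Q : set (R * T)) :=
  exists xi : bord, forall alpha : T, comp_le V Q alpha xi.

End Hierarchy.

From HB Require Import structures.
From mathcomp Require Import all_boot all_order all_algebra.
From mathcomp Require Import all_classical all_reals all_analysis.
Import Order.TTheory GRing.Theory Num.Theory.
Local Open Scope classical_set_scope.
Local Open Scope ring_scope.

(*   Forward direction: the family of sets whose sections have complexity   *)
(* bounded by one countable ordinal is a sigma-algebra on I x beta (a       *)
(* countable union of bounds is bounded by their limit).  It contains the   *)
(* rectangles A x B with A in B_V, because B_V is contained in the union    *)
(* of the Sigma^V_xi (that union is a sigma-algebra containing the Borel    *)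
(* subsets of I and V).                                                     *)
(*   Backward direction: by induction on the bound xi.  The points alpha    *)
(* whose section is a union of C_n's give a countable union of rectangles   *)
(* C_n x B_n; at the other points the section is a union of complements of  *)
(* sets of strictly smaller level, which are glued together over alpha by   *)
(* the induction hypothesis.          *)

Lemma ble_limr a f n : ble a (f n) -> ble a (blim f).
Proof.
elim: a => [|a IH|g IH] H.
- exact: ble_zero.
- inversion H as [|a0 b0 Hab|]; subst; exact/ble_succ/(blt_lim Hab).
- inversion H as [| |g0 b0 Hg]; subst; apply: ble_lim => m; exact: IH.
Qed.
Arguments ble_limr {a f n}.

Lemma ble_refl a : ble a a.
Proof.
elim: a => [|a IH|f IH]; first exact: ble_zero.
- exact/ble_succ/blt_succ.
- by apply: ble_lim => n; apply: ble_limr.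
Qed.

Ltac invle H := inversion H as [|?a ?b ?Hl|?f ?b ?Hl]; subst; clear H.
Ltac invlt H := inversion H as [?a ?b ?Hl|?a ?f ?n ?Hl]; subst; clear H.

(* Transitivity of <= and of (< then <=), proved together by induction on  *)
(* the left tree, since the two relations are mutually defined.            *)
Lemma ble_blt_trans_mutual a :
  (forall b c, ble a b -> ble b c -> ble a c) /\
  (forall b c, blt a b -> ble b c -> blt a c).
Proof.
have lt_of_le : forall x, (forall b c, ble x b -> ble b c -> ble x c) ->
    forall b c, blt x b -> ble b c -> blt x c.
  move=> x trx; elim=> [|b IHb|f IHb] c H1 H2; invlt H1.
  - invle H2; elim: c Hl0 => [|c IHc|g IHc] H4; invlt H4.
    + exact/blt_succ/(trx _ _ Hl Hl0).
    + exact: blt_lim (IHc n Hl0).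
  - invle H2; exact: IHb (Hl0 n).
elim: a => [|a IH|f IH].
- by split; [move=> *; exact: ble_zero | apply: lt_of_le => *; exact: ble_zero].
- suff tra : forall b c, ble (bsucc a) b -> ble b c -> ble (bsucc a) c.
    by split=> //; apply: lt_of_le.
  move=> b c H1 H2; invle H1; exact/ble_succ/(IH.2 _ _ Hl H2).
- suff trf : forall b c, ble (blim f) b -> ble b c -> ble (blim f) c.
    by split=> //; apply: lt_of_le.
  move=> b c H1 H2; invle H1; apply: ble_lim => n; exact: (IH n).1 (Hl n) H2.
Qed.

Lemma ble_trans {a b c} : ble a b -> ble b c -> ble a c.
Proof. exact: (ble_blt_trans_mutual a).1. Qed.

Lemma blt_ble_trans {a b c} : blt a b -> ble b c -> blt a c.
Proof. exact: (ble_blt_trans_mutual a).2. Qed.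

Lemma ble_bsucc b : ble b (bsucc b).
Proof.
elim: b => [|b IH|f IH]; first exact: ble_zero.
- exact/ble_succ/blt_succ.
- apply: ble_lim => n; apply: ble_trans (IH n) _.
  exact/ble_succ/blt_succ/ble_limr/ble_refl.
Qed.

Lemma blt_ble a b : blt a b -> ble a b.
Proof.
elim: b a => [|b IH|f IH] a H; invlt H.
- exact: ble_trans Hl (ble_bsucc b).
- exact: ble_limr (IH _ _ Hl).
Qed.

Lemma bone_not_ble_bzero : ~ ble bone bzero.
Proof. by move=> H; invle H; invlt Hl. Qed.

Section SigmaAlgebraClosure.
Variables (T : Type) (D : set T) (G : set (set T)).
Hypothesis sG : sigma_algebra D G.

Lemma sa0 : G set0. Proof. by case: sG. Qed.

Lemma saC X : G X -> G (D `\` X). Proof. by case: sG => _ h _; apply: h. Qed.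

Lemma saU (A : nat -> set T) : (forall k, G (A k)) -> G (\bigcup_k A k).
Proof. by case: sG => _ _ h; apply: h. Qed.

Lemma saU2 X Y : G X -> G Y -> G (X `|` Y).
Proof.
move=> hX hY; have -> : X `|` Y = \bigcup_k (if k is 0%N then X else Y).
  apply/seteqP; split => x /=.
  - by case=> h; [exists 0%N | exists 1%N].
  - by case=> -[|k] _ h; [left | right].
by apply: saU => -[|k].
Qed.

(* intersections are complements of unions, which needs G to live in D *)
Lemma saI2 X Y : (forall Z, G Z -> Z `<=` D) -> G X -> G Y -> G (X `&` Y).
Proof.
move=> inD hX hY; have -> : X `&` Y = D `\` ((D `\` X) `|` (D `\` Y)).
  apply/seteqP; split => x /=.
  - by move=> [xX xY]; split; [exact: inD _ hX _ xX | case=> -[]].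
  - move=> [xD h]; split.
    + by apply: contra_notP h => nX; left.
    + by apply: contra_notP h => nY; right.
by apply/saC/saU2; apply: saC.
Qed.

Lemma saCU (I : countType) (F : I -> set T) :
  (forall i, G (F i)) -> G (\bigcup_i F i).
Proof.
move=> hF; have -> : \bigcup_i F i =
    \bigcup_k (if @unpickle I k is Some i then F i else set0).
  apply/seteqP; split => x /=.
  - by case=> i _ h; exists (pickle i) => //; rewrite pickleK.
  - by case=> k _; case: (unpickle k) => // i h; exists i.
by apply: saU => k; case: (unpickle k) => //; exact: sa0.
Qed.

End SigmaAlgebraClosure.

Arguments sa0 {T D G} sG.
Arguments saC {T D G} sG {X}.
Arguments saU {T D G} sG {A}.
Arguments saU2 {T D G} sG {X Y}.
Arguments saI2 {T D G} sG {X Y}.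
Arguments saCU {T D G} sG {I F}.

Lemma g_sigma_sub (T : Type) (D : set T) (G : set (set T)) :
  (forall X, G X -> X `<=` D) -> forall X, <<s D, G >> X -> X `<=` D.
Proof.
move=> GD; apply: (@smallest_sub _ _ _ [set X | X `<=` D]) => //; split => //.
- by move=> A _; exact: subDsetl.
- by move=> F hF x [k _ h]; exact: hF k _ h.
Qed.

Section Hierarchy.
Variables (R : realType) (V : set R).
Local Notation Iu := (@Iu R).
Hypothesis hVI : V `<=` Iu.

Lemma Cfam_sub C : Cfam V C -> C `<=` Iu.
Proof. by move=> [[->|->]|[p [q [_ H]]]] // x []. Qed.

Lemma SigmaV_sub {xi A} : SigmaV V xi A -> A `<=` Iu.
Proof.
elim=> [xi' F _ HF|xi' xs S _ _ _ _] r.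
- by case=> C /HF /Cfam_sub; apply.
- by case=> n _ [].
Qed.

Lemma SigmaV_bone {xi A} : SigmaV V xi A -> ble bone xi.
Proof. by case=> [? ? [_ h] _ | ? ? ? h _ _] //; exact: blt_ble h. Qed.

Lemma SigmaV_set0 : SigmaV V bone set0.
Proof.
have := @SigmaV_one R V bone set0 (conj (ble_refl _) (ble_refl _)) (sub0set _).
by rewrite bigcup_set0.
Qed.

Lemma SigmaV_V : SigmaV V bone V.
Proof.
have := @SigmaV_one R V bone [set V] (conj (ble_refl _) (ble_refl _)).
by rewrite bigcup_set1; apply => C ->; left; left.
Qed.

(* the complement of a level-eta set is a (one-term) union at level eta+1 *)
Lemma SigmaV_compl {eta A} : SigmaV V eta A -> SigmaV V (bsucc eta) (Iu `\` A).
Proof.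
move=> h; have -> : Iu `\` A = \bigcup_(n in [set: nat]) (Iu `\` A).
  by rewrite bigcup_const //; exists 0%N.
apply: (SigmaV_gt (xs := fun _ => eta)) => [|n|n //].
- exact/blt_succ/(SigmaV_bone h).
- exact/blt_succ/ble_refl.
Qed.

(* a countable union of sets of levels eta_k <= xi_k has level             *)
(* sup_k (xi_k + 1) + 1, writing each A_k as the complement of I \ A_k      *)
Lemma SigmaV_union {eta xi : nat -> bord} {A : nat -> set R} :
  (forall k, SigmaV V (eta k) (A k)) -> (forall k, ble (eta k) (xi k)) ->
  SigmaV V (bsucc (blim (fun k => bsucc (xi k)))) (\bigcup_k A k).
Proof.
move=> hA hle; have -> : \bigcup_k A k = \bigcup_k (Iu `\` (Iu `\` A k)).
  by apply: eq_bigcupr => k _; rewrite setDD setIidr //; exact: SigmaV_sub (hA k).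
apply: (SigmaV_gt (xs := fun k => bsucc (eta k))) => [|k|k].
- exact/blt_succ/ble_succ/(blt_lim (n := 0%N))/blt_succ/ble_zero.
- exact/blt_succ/ble_succ/(blt_lim (n := k))/blt_succ.
- exact: SigmaV_compl.
Qed.

Definition sigma1_union (A : set R) : Prop :=
  exists F, F `<=` Cfam V /\ A = \bigcup_(C in F) C.

Lemma SigmaV_cases {eta A} : SigmaV V eta A ->
  sigma1_union A \/
  exists (xs : nat -> bord) (S : nat -> set R), (forall n, blt (xs n) eta) /\
    (forall n, SigmaV V (xs n) (S n)) /\ A = \bigcup_n (Iu `\` S n).
Proof.
case=> [xi F _ HF|xi xs S _ hxs hS]; first by left; exists F.
by right; exists xs, S.
Qed.

Lemma SigmaV_open W : W `<=` Iu ->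
  (forall x, W x -> exists p q : rat, ratr p < x < ratr q /\
     `]ratr p, ratr q[%classic `<=` W) -> SigmaV V bone W.
Proof.
move=> WI hW; have -> : W = \bigcup_(C in [set C | Cfam V C /\ C `<=` W]) C.
  apply/seteqP; split => x; last by case=> C [_ CW] /CW.
  move=> Wx; have [p [q [/andP[px xq] sub]]] := hW x Wx.
  exists `]ratr p, ratr q[%classic; last by rewrite /= in_itv /= px xq.
  by split => //; right; exists p, q; split => //; exact: subset_trans sub WI.
apply: SigmaV_one; first by split; exact: ble_refl.
by move=> C [].
Qed.

Definition hier : set (set R) := [set A | exists eta, SigmaV V eta A].

Lemma hier_sigma : sigma_algebra Iu hier.
Proof.
split.
- by exists bone; exact: SigmaV_set0.
- by move=> A [eta h]; exists (bsucc eta); exact: SigmaV_compl.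
- move=> A hA; have [eta Heta] := choice hA.
  by eexists; exact: (SigmaV_union Heta (fun k => ble_refl _)).
Qed.

Lemma hier_sub A : hier A -> A `<=` Iu.
Proof. by move=> [eta /SigmaV_sub]. Qed.

Lemma hier_ray c : hier (Iu `&` [set x | c < x]).
Proof.
exists bone; apply: SigmaV_open; first exact: subIsetl.
move=> x [+ cx]; rewrite /Iu /= in_itv /= => /andP[x0 x1].
have lox : Num.max 0 c < x by rewrite gt_max x0 cx.
have [p] := rat_in_itvoo lox; rewrite in_itv /= => /andP[lp px].
have [q] := rat_in_itvoo x1; rewrite in_itv /= => /andP[xq q1].
exists p, q; split; first by rewrite px xq.
move=> y /=; rewrite in_itv /= => /andP[py yq].
have := lt_trans lp py; rewrite gt_max => /andP[y0 cy].
by split => //; rewrite /Iu /= in_itv /= y0 /=; exact: lt_trans yq q1.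
Qed.

Lemma hier_itv_oc a b : hier (Iu `&` `]a, b]%classic).
Proof.
have -> : Iu `&` `]a, b]%classic =
    (Iu `&` [set x | a < x]) `&` (Iu `\` (Iu `&` [set x | b < x])).
  apply/seteqP; split => x /=.
  - rewrite in_itv /= => -[xI /andP[ax xb]]; split => //; split => //.
    by case=> _; rewrite ltNge xb.
  - move=> [[xI ax] [_ h]]; split => //; rewrite in_itv /= ax /=.
    by rewrite leNgt; apply/negP => bx; apply: h.
apply: (saI2 hier_sigma hier_sub); first exact: hier_ray.
exact/(saC hier_sigma)/hier_ray.
Qed.

(* traces on I of Borel sets are in the hierarchy: the Borel sets are      *)
(* generated by the half-open intervals                                    *)
Lemma borel_hier B0 : @measurable _ (measurableTypeR R) B0 -> hier (Iu `&` B0).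
Proof.
suff : <<s [set: R], (@ocitv R) >> `<=` [set B | hier (Iu `&` B)] by apply.
apply: smallest_sub; last by move=> _ [[a b] _ <-]; exact: hier_itv_oc.
split.
- by rewrite /= setI0; exact: (sa0 hier_sigma).
- move=> B hB /=; have -> : Iu `&` ([set: R] `\` B) = Iu `\` (Iu `&` B).
    by rewrite setTD setDIr setDv set0U setDE.
  exact: (saC hier_sigma).
- by move=> F hF /=; rewrite setI_bigcupr; exact: (saU hier_sigma).
Qed.

Lemma BV_hier A : BV V A -> hier A.
Proof.
apply: smallest_sub; first exact: hier_sigma.
move=> _ [[B0 [mB ->]]| ->]; first exact: borel_hier.
by exists bone; exact: SigmaV_V.
Qed.

End Hierarchy.

Arguments SigmaV_sub {R V} hVI {xi A}.
Arguments SigmaV_bone {R V xi A}.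
Arguments SigmaV_compl {R V eta A}.
Arguments SigmaV_union {R V} hVI {eta xi A}.
Arguments sigma1_union {R}.
Arguments SigmaV_cases {R V eta A}.
Arguments BV_hier {R V} hVI {A}.

Section Product.
Variables (R : realType) (V : set R).
Local Notation Iu := (@Iu R).
Hypothesis hVI : V `<=` Iu.
Variable beta : Type.
Local Notation D := (Iu `*` [set: beta]).
Local Notation BVp := (@BV_prod R V beta).

Lemma BV_sigma : sigma_algebra Iu (BV V).
Proof. exact: smallest_sigma_algebra. Qed.

Lemma BVp_sigma : sigma_algebra D BVp.
Proof. exact: smallest_sigma_algebra. Qed.

Lemma BV_V : BV V V.
Proof. by apply: sub_sigma_algebra; right. Qed.

Lemma BV_Iu : BV V Iu.
Proof. by have := saC BV_sigma (sa0 BV_sigma); rewrite setD0. Qed.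

Lemma BV_sub A : BV V A -> A `<=` Iu.
Proof. by apply: g_sigma_sub => _ [[B0 [_ ->]]| ->] //; exact: subIsetl. Qed.

Lemma BVp_rect A B : BV V A -> BVp (A `*` B).
Proof. by move=> hA; apply: sub_sigma_algebra; exists A => //; exists B. Qed.

Lemma BVp_sub X : BVp X -> X `<=` D.
Proof.
apply: g_sigma_sub => _ [A hA [B _ <-]] [x y] [/= xA _].
by split => //; exact: BV_sub hA _ xA.
Qed.

Lemma section_rect_in (A : set R) (B : set beta) a :
  B a -> section (A `*` B) a = A.
Proof. by move=> Ba; apply/seteqP; split => x; rewrite /section /=; [case | split]. Qed.

Lemma section_rect_out (A : set R) (B : set beta) a :
  ~ B a -> section (A `*` B) a = set0.
Proof. by move=> nBa; apply/seteqP; split => x // []. Qed.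

Lemma section_setD (Q : set (R * beta)) a :
  section (D `\` Q) a = Iu `\` section Q a.
Proof. by apply/seteqP; split => x; rewrite /section /= => -[] // []. Qed.

Lemma section_bigcup (F : nat -> set (R * beta)) a :
  section (\bigcup_k F k) a = \bigcup_k section (F k) a.
Proof. by apply/seteqP; split => x. Qed.

(* Forward direction: the sets whose section complexities are bounded by a *)
(* single countable ordinal form a sigma-algebra containing the rectangles *)
Definition bounded_complexity : set (set (R * beta)) :=
  [set Q | exists xi, forall a, comp_le V Q a xi].

Lemma bounded_complexity_sigma : sigma_algebra D bounded_complexity.
Proof.
split.
- exists bone => a; exists bone; split; first exact: ble_refl.
  exact: SigmaV_set0.
- move=> Q [xi hxi]; exists (bsucc xi) => a.
  have [eta [le h]] := hxi a; exists (bsucc eta); split.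
    exact/ble_succ/blt_succ.
  by rewrite section_setD; exact: SigmaV_compl.
- move=> F hF; have [xi hxi] := choice hF.
  exists (bsucc (blim (fun k => bsucc (xi k)))) => a.
  have [eta heta] := choice (fun k => hxi k a).
  eexists; split; first exact: ble_refl.
  rewrite section_bigcup.
  by have := SigmaV_union hVI (fun k => (heta k).2) (fun k => (heta k).1).
Qed.

Lemma BVp_bounded_complexity : BVp `<=` bounded_complexity.
Proof.
apply: smallest_sub; first exact: bounded_complexity_sigma.
move=> _ [A hA [B _ <-]]; have [eta h] := BV_hier hVI hA.
exists eta => a; have [Ba|nBa] := pselect (B a).
- by exists eta; rewrite section_rect_in //; split; first exact: ble_refl.
- exists bone; rewrite section_rect_out //.
  by split; [exact: SigmaV_bone h | exact: SigmaV_set0].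
Qed.

Definition bounded_sections (Q : set (R * beta)) (xi : bord) : Prop :=
  forall a, section Q a = set0 \/
    exists eta, ble eta xi /\ SigmaV V eta (section Q a).

Definition level_measurable (xi : bord) : Prop :=
  forall Q, bounded_sections Q xi -> BVp Q.

Lemma level_measurable0 : level_measurable bzero.
Proof.
move=> Q hs; suff -> : Q = set0 by exact: (sa0 BVp_sigma).
apply/seteqP; split => -[r a] // Qra.
case: (hs a) => [e|[eta [le h]]]; first by have : section Q a r by []; rewrite e.
by have := bone_not_ble_bzero (ble_trans (SigmaV_bone h) le).
Qed.

Definition Cenum (i : bool + rat * rat) : set R :=
  match i with
  | inl true => V
  | inl false => Iu `\` V
  | inr pq => Iu `&` `]ratr pq.1, ratr pq.2[%classic
  end.

Lemma Cfam_Cenum : Cfam V `<=` range Cenum.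
Proof.
move=> C [[->|->]|[p [q [-> CI]]]]; [by exists (inl true) | by exists (inl false) |].
by exists (inr (p, q)); rewrite //= setIidr.
Qed.

Lemma BV_Cenum i : BV V (Cenum i).
Proof.
case: i => [[]|[p q]] /=; [exact: BV_V | exact: (saC BV_sigma BV_V) |].
apply: sub_sigma_algebra; left; exists `]ratr p, ratr q[%classic.
by split => //; exact: measurable_itv.
Qed.

(* the points of Q above an alpha whose section is a union of C_n's form   *)
(* the countable union of the rectangles C_n x {alpha | C_n <= Q_alpha}    *)
Lemma sigma1_part Q : BVp (Q `&` [set z | sigma1_union V (section Q z.2)]).
Proof.
pose B i := [set a | sigma1_union V (section Q a) /\ Cenum i `<=` section Q a].
have -> : Q `&` [set z | sigma1_union V (section Q z.2)] =
    \bigcup_i (Cenum i `*` B i).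
  apply/seteqP; split => -[r a] /=; last by move=> [i _ [Cr [L CQ]]]; split => //; exact: CQ.
  move=> [Qra [F [FC e]]]; have : (\bigcup_(C in F) C) r by rewrite -e.
  case=> C FC' Cr; have [i _ Ci] := Cfam_Cenum _ (FC _ FC').
  exists i => //; split; first by rewrite Ci.
  by split; [exists F | rewrite Ci e => y Cy; exists C].
by apply: (saCU BVp_sigma) => i; exact: BVp_rect (BV_Cenum i).
Qed.

(* gluing: if each S_alpha is empty or has level below some g_m, and every *)
(* level g_m satisfies the induction hypothesis, then {(r, alpha) | r in    *)
(* S_alpha} is in B_V (x) P(beta): split it according to a choice of m      *)
Lemma glue_levels {g : nat -> bord} : (forall m, level_measurable (g m)) ->
  forall S : beta -> set R,
  (forall a, S a = set0 \/ exists m eta, ble eta (g m) /\ SigmaV V eta (S a)) ->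
  BVp [set z | S z.2 z.1].
Proof.
move=> IH S hS; have /choice[M HM] : forall a, exists m,
    S a = set0 \/ exists eta, ble eta (g m) /\ SigmaV V eta (S a).
  by move=> a; case: (hS a) => [e|[m h]]; [exists 0%N; left | exists m; right].
have -> : [set z | S z.2 z.1] = \bigcup_m [set z | M z.2 = m /\ S z.2 z.1].
  by apply/seteqP; split => [[r a] Sra|[r a] [m _ [_ Sra]]] //; exists (M a).
apply: (saU BVp_sigma) => m; apply: (IH m) => a.
case: (pselect (M a = m)) => [<-|nm].
- suff -> : section [set z | M z.2 = M a /\ S z.2 z.1] a = S a by exact: HM a.
  by apply/seteqP; split => x; rewrite /section /=; [case | split].
- by left; apply/seteqP; split => x // [].
Qed.

(* the points above an alpha whose section is not a union of C_n's: there *)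
(* Q_alpha = U_n (I \ S_alpha,n) with S_alpha,n of level < xi             *)
Lemma higher_part {xi} {g : nat -> bord} : (forall m, level_measurable (g m)) ->
  (forall x, blt x xi -> exists m, ble x (g m)) ->
  forall Q, bounded_sections Q xi ->
  BVp (Q `&` [set z | ~ sigma1_union V (section Q z.2)]).
Proof.
move=> IH Hg Q hs; pose L a := sigma1_union V (section Q a).
have /choice[S HS] : forall a, exists S : nat -> set R,
    (forall n, S n = set0 \/
       exists m eta, ble eta (g m) /\ SigmaV V eta (S n)) /\
    (~ L a -> section Q a = \bigcup_n (Iu `\` S n)).
  move=> a; case: (pselect (L a)) => La.
    by exists (fun _ => set0); split => // n; left.
  case: (hs a) => [e|[eta [le h]]].
    by exfalso; apply: La; exists set0; split => //; rewrite e bigcup_set0.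
  case: (SigmaV_cases h) => [//|[xs [S [hxs [hS e]]]]].
  exists S; split => // n; right.
  by have [m hm] := Hg _ (blt_ble_trans (hxs n) le); exists m, (xs n).
have -> : Q `&` [set z | ~ L z.2] =
    \bigcup_n ((Iu `*` [set a | ~ L a]) `&` (D `\` [set z | S z.2 n z.1])).
  apply/seteqP; split => -[r a] /=.
  - move=> [Qra La]; have : section Q a r by [].
    by rewrite (HS a).2 // => -[n _ [rI nS]]; exists n.
  - move=> [n _ [[rI La] [_ nS]]]; split => //.
    by have : section Q a r; [rewrite (HS a).2 //; exists n | ].
apply: (saU BVp_sigma) => n; apply: (saI2 BVp_sigma BVp_sub).
- exact: BVp_rect BV_Iu.
- apply: (saC BVp_sigma).
  exact: glue_levels IH (fun a => S a n) (fun a => (HS a).1 n).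
Qed.

Lemma level_measurable_step {xi} {g : nat -> bord} :
  (forall m, level_measurable (g m)) ->
  (forall x, blt x xi -> exists m, ble x (g m)) -> level_measurable xi.
Proof.
move=> IH Hg Q hs; rewrite -[Q]setIT -(setUv [set z | sigma1_union V (section Q z.2)]).
rewrite setIUr; apply: (saU2 BVp_sigma (sigma1_part Q)).
exact: higher_part IH Hg Q hs.
Qed.

Lemma level_measurable_all xi : level_measurable xi.
Proof.
elim: xi => [|z IH|f IH]; first exact: level_measurable0.
- apply: (level_measurable_step (g := fun _ => z)) => // x H.
  by exists 0%N; invlt H.
- apply: (level_measurable_step (g := f)) => // x H.
  by invlt H; exists n; exact: blt_ble.
Qed.

End Product.

Arguments BVp_bounded_complexity {R V} hVI {beta}.
Arguments level_measurable_all {R V} hVI {beta}.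

Theorem lemma5p1 (R : realType) (V : set R)
    (hVI : V `<=` (@Iu R)) (hV : ~ lebesgue_measurable V)
    (beta : Type) (Q : set (R * beta)) (hQ : Q `<=` (@Iu R) `*` [set: beta]) :
  BV_prod V Q <->
  (sections_in_hierarchy V Q /\ comp_lt_omega1 V Q).
Proof.
split.
- move=> /(BVp_bounded_complexity hVI) [xi hxi]; split; last by exists xi.
  by move=> a; have [eta [_ h]] := hxi a; exists eta.
- move=> [_ [xi hxi]]; apply: (level_measurable_all hVI xi) => a.
  by right; exact: hxi.
Qed.
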